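(* Let $I\subseteq\mathbb{R}_+$ be a nonempty interval containing $0$ and let $f\colon I^n\to\mathbb{R}$. The following are equivalent: (i) $f$ is comonotonically modular; (ii) $f$ is invariant under horizontal min-differences; (iii) there exists $g\colon I^n\to\mathbb{R}$ such that for every $\sigma\in S_n$ and every $\mathbf{x}\in I^n_\sigma$, $$f(\mathbf{x})=g(\mathbf{0})+\sum_{i\in[n]}\Big(g\big(x_{\sigma(i)}\mathbf{1}_{A^\uparrow_\sigma(i)}\big)-g\big(x_{\sigma(i)}\mathbf{1}_{A^\uparrow_\sigma(i+1)}\big)\Big).$$ Moreover, in this case one can take $g=f$ in (iii).
   Context: Notation: $[n]=\{1,\ldots,n\}$; $S_n$ is the set of permutations of $[n]$; $\mathbf{1}_A$ is the indicator tuple of $A\subseteq[n]$, $\mathbf{0}=\mathbf{1}_\varnothing$. For $\sigma\in S_n$, $\mathbb{R}^n_\sigma=\{\mathbf{x}: x_{\sigma(1)}\leq\cdots\leq x_{\sigma(n)}\}$, $I^n_\sigma=I^n\cap\mathbb{R}^n_\sigma$, $A^\uparrow_\sigma(i)=\{\sigma(i),\ldots,\sigma(n)\}$, $A^\uparrow_\sigma(n+1)=\varnothing$. $\wedge,\vee$ denote componentwise min and max; $\mathbf{x}\wedge c$ is the tuple with components $\min(x_i,c)$. Two tuples $\mathbf{x},\mathbf{x}'\in I^n$ are comonotonic if $\mathbf{x},\mathbf{x}'\in I^n_\sigma$ for some $\sigma\in S_n$. A function $f\colon I^n\to\mathbb{R}$ is comonotonically modular if $f(\mathbf{x})+f(\mathbf{x}')=f(\mathbf{x}\wedge\mathbf{x}')+f(\mathbf{x}\vee\mathbf{x}')$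 for all comonotonic $\mathbf{x},\mathbf{x}'\in I^n$. For $c\geq 0$, $[\mathbf{x}]_c$ is the tuple whose $i$th component is $0$ if $x_i\leq c$ and $x_i$ otherwise. For $I\subseteq\mathbb{R}_+$, $f$ is invariant under horizontal min-differences if $f(\mathbf{x})-f(\mathbf{x}\wedge c)=f([\mathbf{x}]_c)-f([\mathbf{x}]_c\wedge c)$ for all $\mathbf{x}\in I^n$, $c\in I$. *)

From HB Require Import structures.
From mathcomp Require Import all_boot all_order all_algebra all_fingroup.
Set Implicit Arguments. Unset Strict Implicit. Unset Printing Implicit Defensive.
Import Order.TTheory GRing.Theory Num.Theory.
Local Open Scope ring_scope.

Section Defs.
Variables (R : realFieldType) (n : nat).

(* n-tuples are finite functions 'I_n -> R; index i : 'I_n stands for i+1 in [n]. *)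
Definition tup := {ffun 'I_n -> R}.

Definition in_cube (I : pred R) (x : tup) : Prop := forall i, x i \in I.

Definition ordered_by (s : 'S_n) (x : tup) : Prop :=
  forall i j : 'I_n, (i <= j)%N -> x (s i) <= x (s j).

Definition tmeet (x y : tup) : tup := [ffun i => Num.min (x i) (y i)].
Definition tjoin (x y : tup) : tup := [ffun i => Num.max (x i) (y i)].
Definition tmin_c (x : tup) (c : R) : tup := [ffun i => Num.min (x i) c].
Definition tcut (x : tup) (c : R) : tup := [ffun i => if x i <= c then 0 else x i].
Definition tind (c : R) (A : {set 'I_n}) : tup := [ffun i => if i \in A then c else 0].
Definition tzero : tup := [ffun _ => 0].

(* A^up_sigma(k+1) = {sigma(k+1),...,sigma(n)} (0-indexed: k = 0..n, A(n) = empty) *)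
Definition Aup (s : 'S_n) (k : nat) : {set 'I_n} := [set s j | j : 'I_n & (k <= j)%N].

Definition comonotonic (I : pred R) (x x' : tup) : Prop :=
  exists s : 'S_n, [/\ in_cube I x, in_cube I x', ordered_by s x & ordered_by s x'].

Definition comonotonically_modular (I : pred R) (f : tup -> R) : Prop :=
  forall x x' : tup, in_cube I x -> in_cube I x' -> comonotonic I x x' ->
    f x + f x' = f (tmeet x x') + f (tjoin x x').

Definition inv_horiz_min_diff (I : pred R) (f : tup -> R) : Prop :=
  forall (x : tup) (c : R), in_cube I x -> c \in I ->
    f x - f (tmin_c x c) = f (tcut x c) - f (tmin_c (tcut x c) c).

Definition represented_by (I : pred R) (f g : tup -> R) : Prop :=
  forall (s : 'S_n) (x : tup), in_cube I x -> ordered_by s x ->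
    f x = g tzero + \sum_(k < n) (g (tind (x (s k)) (Aup s k))
                                  - g (tind (x (s k)) (Aup s k.+1))).

Definition is_interval0 (I : pred R) : Prop :=
  [/\ 0 \in I, (forall x, x \in I -> 0 <= x) &
      (forall x y z, x \in I -> z \in I -> x <= y -> y <= z -> y \in I)].

End Defs.

(* Order x increasingly along s and let x_k be the restriction of x to
   A^up_s(k), so that x_0 = x and x_n = 0; then f x - f 0 telescopes into the
   layers f x_k - f x_(k+1).  Everything reduces to the layer identity
   f x_k - f x_(k+1) = f (c 1_A(k)) - f (c 1_A(k+1)) with c = x_(s k).
   Under (i) it is modularity on the comonotonic pair x_(k+1), c 1_A(k), whose
   meet and join are c 1_A(k+1) and x_k.  Under (ii) apply min-difference
   invariance at level c to x_k and to x_(k+1): their meets with c are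
   c 1_A(k) and c 1_A(k+1), and their c-cuts coincide because the two tuples
   differ only at s k, where the value c is cut away.  Conversely, each
   summand of (iii) depends on x only through x_(s k), so (i) and (ii) hold
   summand by summand. *)
From HB Require Import structures.
From mathcomp Require Import all_boot all_order all_algebra all_fingroup.
From mathcomp Require Import lra.
Import Order.TTheory GRing.Theory Num.Theory.
Set Implicit Arguments. Unset Strict Implicit. Unset Printing Implicit Defensive.
Local Open Scope ring_scope.

Section Restriction.
Variables (R : realFieldType) (n : nat).
Local Notation vec := {ffun 'I_n -> R}.

Definition trestr (x : vec) (A : {set 'I_n}) : vec :=
  [ffun i => if i \in A then x i else 0].

Lemma mem_Aup (s : 'S_n) k i : (i \in Aup s k) = (k <= s^-1%g i)%N.
Proof.
apply/imsetP/idP => [[j]|h]; first by rewrite inE => hj ->; rewrite permK.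
by exists (s^-1%g i); rewrite ?inE ?permKV.
Qed.

Lemma Aup0 (s : 'S_n) : Aup s 0 = setT.
Proof. by apply/setP => i; rewrite mem_Aup inE. Qed.

Lemma Aup_size (s : 'S_n) : Aup s n = set0.
Proof. by apply/setP => i; rewrite mem_Aup inE leqNgt ltn_ord. Qed.

Lemma AupS (s : 'S_n) (k : 'I_n) : Aup s k.+1 = Aup s k :\ s k.
Proof.
apply/setP => i; rewrite in_setD1 !mem_Aup ltn_neqAle (inj_eq val_inj).
by rewrite eq_sym (canF_eq (permKV s)).
Qed.

Lemma trestrT (x : vec) : trestr x setT = x.
Proof. by apply/ffunP => i; rewrite ffunE inE. Qed.

Lemma trestr0 (x : vec) : trestr x set0 = tzero R n.
Proof. by apply/ffunP => i; rewrite !ffunE inE. Qed.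

Lemma exists_ordered_perm (x : vec) : exists s : 'S_n, ordered_by s x.
Proof.
set t := [tuple x i | i < n].
have /tuple_permP[s def_t] : perm_eq (sort <=%R t) t by rewrite perm_sort.
exists s => i j le_ij.
have sorted_t : sorted <=%R (sort <=%R t) by apply/sort_sorted/le_total.
have := sorted_leq_nth le_trans lexx 0 sorted_t; rewrite def_t.
move/(_ i j); rewrite !inE size_tuple !ltn_ord => /(_ isT isT le_ij).
by rewrite -!tnth_nth !tnth_map !tnth_ord_tuple.
Qed.

Lemma ordered_Aup (s : 'S_n) (x : vec) (k : 'I_n) i :
  ordered_by s x -> i \in Aup s k -> x (s k) <= x i.
Proof. by rewrite mem_Aup -{2}[i](permKV s) => ox; apply: ox. Qed.

Lemma tmin_trestr (x : vec) (A : {set 'I_n}) c :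
  0 <= c -> (forall i, i \in A -> c <= x i) -> tmin_c (trestr x A) c = tind c A.
Proof.
move=> c_ge0 ge_c; apply/ffunP => i; rewrite !ffunE.
by case: ifP => [/ge_c|_]; [exact: min_r | exact: min_l].
Qed.

Lemma tcut_trestrD1 (x : vec) (A : {set 'I_n}) i c :
  0 <= c -> x i <= c -> tcut (trestr x A) c = tcut (trestr x (A :\ i)) c.
Proof.
move=> c_ge0 xi_le_c; apply/ffunP => j; rewrite !ffunE !inE.
have [->|_] := eqVneq j i; last by [].
by case: (i \in A); rewrite /= ?xi_le_c c_ge0.
Qed.

Lemma tmeet_trestrD1 (x : vec) (A : {set 'I_n}) i :
  0 <= x i -> (forall j, j \in A -> x i <= x j) ->
  tmeet (trestr x (A :\ i)) (tind (x i) A) = tind (x i) (A :\ i).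
Proof.
move=> xi_ge0 ge_xi; apply/ffunP => j; rewrite !ffunE !inE.
have [->|_] := eqVneq j i; first by case: (i \in A); rewrite ?min_l ?minxx.
rewrite /=; case: ifP => [/ge_xi|_]; [exact: min_r | exact: minxx].
Qed.

Lemma tjoin_trestrD1 (x : vec) (A : {set 'I_n}) i :
  0 <= x i -> (forall j, j \in A -> x i <= x j) ->
  tjoin (trestr x (A :\ i)) (tind (x i) A) = trestr x A.
Proof.
move=> xi_ge0 ge_xi; apply/ffunP => j; rewrite !ffunE !inE.
have [->|_] := eqVneq j i; first by case: (i \in A); rewrite ?max_r ?maxxx.
rewrite /=; case: ifP => [/ge_xi|_]; [exact: max_l | exact: maxxx].
Qed.

End Restriction.

Section Representation.
Variables (R : realFieldType) (n : nat) (I : pred R).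
Hypothesis hI : is_interval0 I.
Local Notation vec := {ffun 'I_n -> R}.

Let mem0 : 0 \in I. Proof. by case: hI. Qed.
Let ge0 x : x \in I -> 0 <= x. Proof. by case: hI => _ + _; apply. Qed.

Lemma in_cube_tmeet (x y : vec) : in_cube I x -> in_cube I y -> in_cube I (tmeet x y).
Proof. by move=> hx hy i; rewrite ffunE; case: leP. Qed.

Lemma in_cube_tjoin (x y : vec) : in_cube I x -> in_cube I y -> in_cube I (tjoin x y).
Proof. by move=> hx hy i; rewrite ffunE; case: leP. Qed.

Lemma in_cube_tmin_c (x : vec) c : in_cube I x -> c \in I -> in_cube I (tmin_c x c).
Proof. by move=> hx hc i; rewrite ffunE; case: leP. Qed.

Lemma in_cube_tcut (x : vec) c : in_cube I x -> in_cube I (tcut x c).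
Proof. by move=> hx i; rewrite ffunE; case: ifP. Qed.

Lemma in_cube_tind c (A : {set 'I_n}) : c \in I -> in_cube I (tind c A).
Proof. by move=> hc i; rewrite ffunE; case: ifP. Qed.

Lemma in_cube_trestr (x : vec) (A : {set 'I_n}) : in_cube I x -> in_cube I (trestr x A).
Proof. by move=> hx i; rewrite ffunE; case: ifP. Qed.

Lemma ordered_tmeet (s : 'S_n) (x y : vec) :
  ordered_by s x -> ordered_by s y -> ordered_by s (tmeet x y).
Proof.
move=> ox oy i j le_ij; rewrite !ffunE.
by rewrite le_min !ge_min (ox _ _ le_ij) (oy _ _ le_ij) !orbT.
Qed.

Lemma ordered_tjoin (s : 'S_n) (x y : vec) :
  ordered_by s x -> ordered_by s y -> ordered_by s (tjoin x y).
Proof.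
move=> ox oy i j le_ij; rewrite !ffunE.
by rewrite ge_max !le_max (ox _ _ le_ij) (oy _ _ le_ij) !orbT.
Qed.

Lemma ordered_tmin_c (s : 'S_n) (x : vec) c : ordered_by s x -> ordered_by s (tmin_c x c).
Proof.
move=> ox i j le_ij; rewrite !ffunE.
by rewrite le_min !ge_min (ox _ _ le_ij) lexx !orbT.
Qed.

Lemma ordered_tcut (s : 'S_n) (x : vec) c :
  in_cube I x -> ordered_by s x -> ordered_by s (tcut x c).
Proof.
move=> hx ox i j le_ij; rewrite !ffunE.
case: ifP => [_|xi_gt_c]; first by case: ifP => // _; apply/ge0/hx.
case: ifP => [xj_le_c|_]; last exact: ox.
by rewrite (le_trans (ox _ _ le_ij) xj_le_c) in xi_gt_c.
Qed.

Lemma ordered_tind (s : 'S_n) (c : R) k : 0 <= c -> ordered_by s (tind c (Aup s k)).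
Proof.
move=> c_ge0 i j le_ij; rewrite !ffunE !mem_Aup !permK.
case: ifP => [k_le_i|_]; first by rewrite (leq_trans k_le_i le_ij).
by case: ifP.
Qed.

Lemma ordered_trestr (s : 'S_n) (x : vec) k :
  in_cube I x -> ordered_by s x -> ordered_by s (trestr x (Aup s k)).
Proof.
move=> hx ox i j le_ij; rewrite !ffunE !mem_Aup !permK.
case: ifP => [k_le_i|_]; first by rewrite (leq_trans k_le_i le_ij); apply: ox.
by case: ifP => _; [apply/ge0/hx | rewrite lexx].
Qed.

Variable f : vec -> R.

Definition layer_identity (s : 'S_n) (x : vec) (k : 'I_n) : Prop :=
  f (trestr x (Aup s k)) - f (trestr x (Aup s k.+1)) =
  f (tind (x (s k)) (Aup s k)) - f (tind (x (s k)) (Aup s k.+1)).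

Lemma represented_by_self_of_layers :
  (forall (s : 'S_n) (x : vec), in_cube I x -> ordered_by s x ->
     forall k : 'I_n, layer_identity s x k) ->
  represented_by I f f.
Proof.
move=> step s x hx ox.
have telescope : f x = f (tzero R n) +
    \sum_(k < n) (f (trestr x (Aup s k)) - f (trestr x (Aup s k.+1))).
  rewrite -(big_mkord xpredT (fun k => f (trestr x (Aup s k)) - f (trestr x (Aup s k.+1)))).
  rewrite (@telescope_sumr_eq _ 0 n (fun k => - f (trestr x (Aup s k)))) //; last first.
    by move=> k _; rewrite opprK addrC.
  by rewrite Aup0 Aup_size trestrT trestr0 opprK addNKr.
by rewrite telescope; congr (_ + _); apply: eq_bigr => k _; apply: step.
Qed.

Lemma modular_layer_identity (s : 'S_n) (x : vec) (k : 'I_n) :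
  comonotonically_modular I f -> in_cube I x -> ordered_by s x -> layer_identity s x k.
Proof.
move=> modular hx ox; rewrite /layer_identity; set c := x (s k).
have c_ge0 : 0 <= c := ge0 (hx _).
have ge_c j : j \in Aup s k -> c <= x j := ordered_Aup ox.
have y_in := in_cube_trestr (Aup s k.+1) hx.
have z_in := in_cube_tind (Aup s k) (hx (s k)).
have := modular _ _ y_in z_in.
have comon : comonotonic I (trestr x (Aup s k.+1)) (tind c (Aup s k)).
  by exists s; split => //; [exact: ordered_trestr | exact: ordered_tind].
move=> /(_ comon); rewrite AupS tmeet_trestrD1 // tjoin_trestrD1 //.
by move=> eq_fs; lra.
Qed.

Lemma horiz_layer_identity (s : 'S_n) (x : vec) (k : 'I_n) :
  inv_horiz_min_diff I f -> in_cube I x -> ordered_by s x -> layer_identity s x k.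
Proof.
move=> horiz hx ox; rewrite /layer_identity; set c := x (s k).
have c_ge0 : 0 <= c := ge0 (hx _).
have ge_c j : j \in Aup s k -> c <= x j := ordered_Aup ox.
have ge_c' j : j \in Aup s k :\ s k -> c <= x j by case/setD1P => _ /ge_c.
have := horiz (trestr x (Aup s k)) c (in_cube_trestr _ hx) (hx _).
have := horiz (trestr x (Aup s k.+1)) c (in_cube_trestr _ hx) (hx _).
rewrite AupS !tmin_trestr // (tcut_trestrD1 (Aup s k) c_ge0 (lexx c)).
by move=> eq_fs eq_fs'; lra.
Qed.

Lemma represented_modular (g : vec -> R) :
  represented_by I f g -> comonotonically_modular I f.
Proof.
move=> rep x y hx hy [s [_ _ ox oy]].
rewrite (rep s x) // (rep s y) // (rep s (tmeet x y)); last first.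
- exact: ordered_tmeet.
- exact: in_cube_tmeet.
rewrite (rep s (tjoin x y)); last first.
- exact: ordered_tjoin.
- exact: in_cube_tjoin.
rewrite addrACA [RHS]addrACA -!big_split; congr (_ + _).
by apply: eq_bigr => k _; rewrite !ffunE; case: leP => _ //; apply: addrC.
Qed.

Lemma represented_horiz (g : vec -> R) :
  represented_by I f g -> inv_horiz_min_diff I f.
Proof.
move=> rep x c hx hc; have [s ox] := exists_ordered_perm x.
have c_ge0 := ge0 hc.
have xc_in := in_cube_tmin_c hx hc.
have cut_in := in_cube_tcut c hx.
have cutc_in := in_cube_tmin_c cut_in hc.
have o_cut := ordered_tcut c hx ox.
rewrite (rep s x) // (rep s _ xc_in (ordered_tmin_c c ox)) (rep s _ cut_in o_cut).
rewrite (rep s _ cutc_in (ordered_tmin_c c o_cut)).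
rewrite !opprD addrACA subrr add0r addrACA subrr add0r -!sumrB.
apply: eq_bigr => k _; rewrite !ffunE; case: ifP => // le_xc.
by rewrite (min_l le_xc) (min_l c_ge0) !subrr.
Qed.

End Representation.

Theorem theorem9 (R : realFieldType) (n : nat) (I : pred R)
  (hI : is_interval0 I) (f : {ffun 'I_n -> R} -> R) :
  (comonotonically_modular I f <-> inv_horiz_min_diff I f) /\
  (comonotonically_modular I f <-> exists g : {ffun 'I_n -> R} -> R, represented_by I f g) /\
  (comonotonically_modular I f -> represented_by I f f).
Proof.
have modular_self : comonotonically_modular I f -> represented_by I f f.
  by move=> modular; apply: represented_by_self_of_layers => s x hx ox k; apply: (modular_layer_identity hI).
have horiz_self : inv_horiz_min_diff I f -> represented_by I f f.
  by move=> horiz; apply: represented_by_self_of_layers => s x hx ox k; apply: (horiz_layer_identity hI).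
split; [split | split => //; split].
- by move/modular_self/(represented_horiz hI).
- by move/horiz_self/represented_modular.
- by move/modular_self => rep; exists f.
- by case=> g /represented_modular.
Qed.
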